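(* For every positive integer $k$, every horizontal alternation of length $2k^4$ contains a monotone horizontal alternation of length at least $2k$.
   Context: A permutation $\pi$ contains $\sigma$ if $\pi$ has a subsequence in the same relative order as $\sigma$. A permutation $\pi$ is a horizontal alternation if there are no indices $i<j$ with $\pi_i$ odd and $\pi_j$ even (all even entries precede all odd entries). A monotone horizontal alternation is a horizontal alternation whose subsequence of odd entries and whose subsequence of even entries are each monotone (increasing or decreasing). *)

From mathcomp Require Import all_boot.
Set Implicit Arguments. Unset Strict Implicit. Unset Printing Implicit Defensive.

(* A permutation of length n is a sequence of naturals which is a
   rearrangement of 1, 2, ..., n (one-line notation, values 1-based so
   parity of entries is as in the paper). *)
Definition is_perm (s : seq nat) : Prop := perm_eq s (iota 1 (size s)).

Definition order_iso (s t : seq nat) : Prop :=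
  size s = size t /\
  forall i j, i < size s -> j < size s ->
    (nth 0 s i < nth 0 s j) = (nth 0 t i < nth 0 t j).

Definition contains (pi sigma : seq nat) : Prop :=
  exists m : bitseq, size m = size pi /\ order_iso (mask m pi) sigma.

Definition horiz_alt (pi : seq nat) : Prop :=
  is_perm pi /\
  forall i j, i < j -> j < size pi ->
    ~ (odd (nth 0 pi i) /\ ~~ odd (nth 0 pi j)).

Definition monotone (s : seq nat) : Prop := sorted ltn s \/ sorted gtn s.

Definition monotone_horiz_alt (pi : seq nat) : Prop :=
  horiz_alt pi /\ monotone [seq x <- pi | odd x] /\
  monotone [seq x <- pi | ~~ odd x].

From mathcomp Require Import all_boot zify.
Set Implicit Arguments. Unset Strict Implicit. Unset Printing Implicit Defensive.

(* Write n = k^4.  A horizontal alternation pi of 1..2n consists of n "blocks"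
   {2j+1, 2j+2} (j < n); the even members of all blocks come before all odd
   members.  Applying the Erdos-Szekeres theorem twice to the block indices
   0..n-1, first keyed by the position of the even member and then by the
   position of the odd member, gives k blocks along which both positions are
   monotone.  The subsequence of pi formed by the 2k members of these blocks,
   standardised by sending the members of the i-th chosen block to 2i+1 and
   2i+2, is the wanted pattern: standardisation preserves order and parity, so
   it is a horizontal alternation whose odd and even entries are monotone. *)

Section ErdosSzekeres.
Variables (T : eqType) (f : T -> nat).

(* The successive left-to-right minima of s below the key of x, and the rest. *)
Fixpoint lrm (x : T) (s : seq T) : seq T :=
  if s is y :: s' then (if f y < f x then y :: lrm y s' else lrm x s') else [::].

Fixpoint nlrm (x : T) (s : seq T) : seq T :=
  if s is y :: s' then (if f y < f x then nlrm y s' else y :: nlrm x s') else [::].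

Lemma lrm_sorted x s : sorted (relpre f gtn) (x :: lrm x s).
Proof.
elim: s x => //= y s IH x; case: ifP => // lt_yx.
by rewrite [path _ _ _]/= lt_yx; exact: IH.
Qed.

Lemma lrm_subseq x s : subseq (lrm x s) s.
Proof.
elim: s x => //= y s IH x; case: ifP => _; first by rewrite eqxx.
exact: subseq_trans (IH x) (subseq_cons _ _).
Qed.

Lemma nlrm_subseq x s : subseq (nlrm x s) s.
Proof.
elim: s x => //= y s IH x; case: ifP => _; last by rewrite eqxx.
exact: subseq_trans (IH y) (subseq_cons _ _).
Qed.

Lemma size_lrm_nlrm x s : size (lrm x s) + size (nlrm x s) = size s.
Proof. elim: s x => //= y s IH x; case: ifP => _ /=; have := IH x; have := IH y; lia. Qed.

(* Every y left over by the minima is preceded by an element of key at most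
   f y, so an increasing sequence starting at y can be extended to the left. *)
Lemma nlrm_extend x s y u : subseq (y :: u) (nlrm x s) ->
  exists2 z, subseq (z :: y :: u) (x :: s) & f z <= f y.
Proof.
elim: s x => [//|w s IH] x; rewrite [nlrm _ _]/=; case: ifP => lt_wx.
  case/IH=> z sub_z le_zy; exists z => //.
  exact: subseq_trans sub_z (subseq_cons _ _).
rewrite [subseq _ _]/=; case: eqP => [-> sub_u|_ /IH[z sub_z le_zy]].
  exists x; last by rewrite leqNgt lt_wx.
  by rewrite /= !eqxx; exact: subseq_trans sub_u (nlrm_subseq _ _).
exists z => //; apply: subseq_trans sub_z _.
exact: (cat_subseq (subseq_refl [:: x]) (subseq_cons s w)).
Qed.

(* Induction on a: either the chain of minima from the head is long, or the
   rest is long enough to contain a long increasing sequence, extended by one. *)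
Theorem erdos_szekeres a b s : uniq (map f s) -> a * b < size s ->
  (exists2 t, subseq t s & a < size t /\ sorted (relpre f ltn) t) \/
  (exists2 t, subseq t s & b < size t /\ sorted (relpre f gtn) t).
Proof.
elim: a s => [|a IH] [|x s] uniq_s size_s //.
  by left; exists [:: x]; rewrite ?sub1seq ?mem_head.
have sub_D : subseq (x :: lrm x s) (x :: s) by rewrite /= eqxx lrm_subseq.
have sub_R : subseq (nlrm x s) (x :: s).
  exact: subseq_trans (nlrm_subseq _ _) (subseq_cons _ _).
have [long_D|short_D] := ltnP b (size (x :: lrm x s)).
  by right; exists (x :: lrm x s) => //; split=> //; exact: lrm_sorted.
have size_R : a * b < size (nlrm x s).
  by move: short_D size_s; rewrite /= -(size_lrm_nlrm x s); lia.
have uniq_R : uniq (map f (nlrm x s)) := subseq_uniq (map_subseq f sub_R) uniq_s.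
case: (IH _ uniq_R size_R) => [[t sub_t [size_t inc_t]]|[t sub_t dec_t]]; last first.
  by right; exists t => //; exact: subseq_trans sub_t sub_R.
case: t sub_t size_t inc_t => // y u sub_t size_t inc_t.
have [z sub_z le_zy] := nlrm_extend sub_t.
have : uniq (map f [:: z, y & u]) := subseq_uniq (map_subseq f sub_z) uniq_s.
rewrite /= inE negb_or => /andP[/andP[ne_zy _] _].
left; exists [:: z, y & u] => //; split; first by rewrite /= ltnS.
by move: inc_t; rewrite /= ltn_neqAle ne_zy le_zy.
Qed.

End ErdosSzekeres.

Definition monotone_by (T : Type) (f : T -> nat) (t : seq T) : Prop :=
  sorted (relpre f ltn) t \/ sorted (relpre f gtn) t.

Lemma monotone_by_subseq (T : eqType) (f : T -> nat) (t u : seq T) :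
  subseq u t -> monotone_by f t -> monotone_by f u.
Proof.
move=> sub_u [inc|dec]; [left|right]; apply: subseq_sorted sub_u _ => //.
  by move=> y x z /= lt_xy; apply: ltn_trans.
by move=> y x z /= lt_yx lt_zy; apply: ltn_trans lt_zy lt_yx.
Qed.

Lemma erdos_szekeres_square (T : eqType) (f : T -> nat) a s :
  uniq (map f s) -> a * a < size s -> exists2 t, subseq t s & a < size t /\ monotone_by f t.
Proof.
move=> uniq_s size_s.
by case: (erdos_szekeres uniq_s size_s) => -[t sub_t [size_t mono_t]];
  exists t => //; split => //; [left|right].
Qed.

Lemma erdos_szekeres_twice (T : eqType) (f g : T -> nat) a s :
  uniq (map f s) -> uniq (map g s) -> a * (a + 2) * (a * (a + 2)) < size s ->
  exists2 t, subseq t s & [/\ a < size t, monotone_by f t & monotone_by g t].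
Proof.
move=> uniq_f uniq_g size_s.
have [t1 sub_t1 [size_t1 mono_f]] := erdos_szekeres_square uniq_f size_s.
have size_t1' : a * a < size t1.
  by apply: leq_ltn_trans size_t1; rewrite leq_mul2l leq_addr orbT.
have uniq_g1 : uniq (map g t1) := subseq_uniq (map_subseq g sub_t1) uniq_g.
have [t sub_t [size_t mono_g]] := erdos_szekeres_square uniq_g1 size_t1'.
exists t; first exact: subseq_trans sub_t sub_t1.
by split=> //; exact: monotone_by_subseq mono_f.
Qed.

Lemma sorted_index_lt (T : eqType) (r : rel T) s x y : transitive r -> sorted r s ->
  x \in s -> y \in s -> r x y -> ~~ r y x -> index x s < index y s.
Proof.
move=> tr_r sorted_s xs ys r_xy nr_yx; rewrite ltn_neqAle leqNgt.
apply/andP; split; last by apply: contra nr_yx; exact: sorted_ltn_index.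
by apply: contraNneq nr_yx => /(index_inj x xs ys) eq_xy; move: r_xy; rewrite eq_xy.
Qed.

Lemma map_index_iota (T : eqType) (s : seq T) :
  uniq s -> map (index^~ s) s = iota 0 (size s).
Proof.
elim: s => //= x s IH /andP[x_notin_s uniq_s]; rewrite eqxx; congr cons.
rewrite -(addn0 1) iotaDl -IH // -map_comp; apply/eq_in_map => y ys /=.
by case: eqVneq => [eq_xy|//]; move: x_notin_s; rewrite eq_xy ys.
Qed.

Lemma index_monotone (T : eqType) (p : T -> nat) (t u : seq T) :
  {subset u <= t} -> sorted (relpre p ltn) u -> monotone_by p t ->
  monotone (map (index^~ t) u).
Proof.
move=> sub_u inc_u mono_t; have all_u : all (mem t) u by apply/allP.
have tr r : transitive r -> transitive (relpre p r) by move=> tr_r y x z; apply: tr_r.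
have gtn_trans : transitive gtn.
  by move=> y x z /= lt_yx lt_zy; apply: ltn_trans lt_zy lt_yx.
case: mono_t => [inc_t|dec_t]; [left|right]; rewrite sorted_map;
  apply: (sub_in_sorted _ all_u inc_u) => a b at_ bt /= lt_ab.
- apply: (sorted_index_lt (tr _ ltn_trans) inc_t at_ bt lt_ab); rewrite /=; lia.
- apply: (sorted_index_lt (tr _ gtn_trans) dec_t bt at_ lt_ab); rewrite /=; lia.
Qed.

Lemma monotone_map_mono (f : nat -> nat) (s : seq nat) :
  {mono f : x y / x < y} -> monotone s -> monotone (map f s).
Proof.
move=> f_mono [inc|dec]; [left|right]; rewrite sorted_map.
  by apply: sub_sorted inc => x y /=; rewrite f_mono.
by apply: sub_sorted dec => x y /=; rewrite f_mono.
Qed.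

(* Block j is {2j+1, 2j+2}; elem par j is its member of parity par. *)
Definition elem (par : bool) (j : nat) : nat := j.*2 + ~~ par + 1.

Definition block (x : nat) : nat := x.-1./2.

Lemma odd_elem par j : odd (elem par j) = par.
Proof. by rewrite /elem addn1 /= oddD odd_double; case: par. Qed.

Lemma block_elem par j : block (elem par j) = j.
Proof. by rewrite /block /elem addn1 /= addnC half_bit_double. Qed.

Lemma elemK x : 0 < x -> elem (odd x) (block x) = x.
Proof.
case: x => // x _; rewrite /elem /block /= negbK addn1.
by rewrite addnC odd_double_half.
Qed.

Lemma ltn_elem p q i j : (elem p i < elem q j) = (i < j) || (i == j) && p && ~~ q.
Proof. by rewrite /elem; case: p; case: q; case: ltngtP => /=; lia. Qed.

Lemma ltn_elem2 par i j : (elem par i < elem par j) = (i < j).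
Proof. by rewrite ltn_elem -andbA andbN andbF orbF. Qed.

Lemma flatten_elem_iota s m :
  flatten [seq [:: elem true i; elem false i] | i <- iota s m] = iota s.*2.+1 m.*2.
Proof.
by elim: m s => //= m IH s; rewrite IH doubleS /elem /= addn0 !addn1.
Qed.

Section Relabel.
Variable t : seq nat.
Hypothesis t_sorted : sorted ltn t.

Definition picked (x : nat) : bool := (0 < x) && (block x \in t).

Definition relabel (x : nat) : nat := elem (odd x) (index (block x) t).

Lemma odd_relabel x : odd (relabel x) = odd x.
Proof. exact: odd_elem. Qed.

Lemma relabel_elem par j : relabel (elem par j) = elem par (index j t).
Proof. by rewrite /relabel odd_elem block_elem. Qed.

Lemma index_ltn : {in t &, forall i j, (index i t < index j t) = (i < j)}.
Proof.
move=> i j it jt; apply/idP/idP.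
  exact: (@sorted_ltn_index _ ltn ltn_trans t t_sorted i j it jt).
by move=> lt_ij; apply: (sorted_index_lt ltn_trans t_sorted it jt lt_ij); rewrite /=; lia.
Qed.

Lemma relabel_mono : {in picked &, {mono relabel : x y / x < y}}.
Proof.
move=> x y /andP[x_gt0 xt] /andP[y_gt0 yt].
rewrite -{2}(elemK x_gt0) -{2}(elemK y_gt0) /relabel !ltn_elem index_ltn //.
by congr (_ || _ && _ && _); apply/eqP/eqP => [/(index_inj 0 xt yt)|->].
Qed.

End Relabel.

Definition no_odd_before_even (a b : nat) : bool := ~~ odd a || odd b.

Lemma evens_first_pairwise s :
  (forall i j, i < j -> j < size s -> ~ (odd (nth 0 s i) /\ ~~ odd (nth 0 s j))) <->
  pairwise no_odd_before_even s.
Proof.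
split => [no_pair|/(pairwiseP 0) ok_s i j lt_ij lt_j [odd_i even_j]].
  apply/(pairwiseP 0) => i j lt_i lt_j lt_ij; rewrite /no_odd_before_even.
  case: (boolP (odd _)) => //= odd_i; apply/negPn/negP => even_j.
  exact: (no_pair i j lt_ij lt_j (conj odd_i even_j)).
move: (ok_s i j (ltn_trans lt_ij lt_j) lt_j lt_ij).
by rewrite /no_odd_before_even odd_i (negbTE even_j).
Qed.

Section Pattern.
Variables (pi : seq nat) (n : nat).
Hypotheses (pi_perm : is_perm pi) (pi_size : size pi = n.*2).

Lemma mem_pi x : (x \in pi) = (0 < x <= n.*2).
Proof. by rewrite (perm_mem pi_perm) mem_iota pi_size. Qed.

Lemma uniq_pi : uniq pi.
Proof. by rewrite (perm_uniq pi_perm) iota_uniq. Qed.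

(* Position in pi of the member of parity par of block j: the two keys to which
   Erdos-Szekeres is applied. *)
Definition pos (par : bool) (j : nat) : nat := index (elem par j) pi.

Lemma elem_in_pi par j : j < n -> elem par j \in pi.
Proof. by rewrite mem_pi /elem; case: par => /=; lia. Qed.

Lemma uniq_pos par : uniq (map (pos par) (iota 0 n)).
Proof.
rewrite (map_comp (index^~ pi) (elem par)) map_inj_in_uniq.
  by rewrite map_inj_uniq ?iota_uniq // => i j; rewrite /elem; lia.
move=> x y /mapP[i]; rewrite mem_iota add0n => /andP[_ lt_in] -> /mapP[j].
rewrite mem_iota add0n => /andP[_ lt_jn] ->.
by apply: (index_inj 0); exact: elem_in_pi.
Qed.

Variable t : seq nat.
Hypothesis t_sub : subseq t (iota 0 n).

Lemma t_sorted : sorted ltn t.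
Proof. exact: (subseq_sorted ltn_trans t_sub (iota_ltn_sorted 0 n)). Qed.

Definition chosen : seq nat := [seq x <- pi | picked t x].
Definition sigma : seq nat := map (relabel t) chosen.
Definition blocks : seq nat := flatten [seq [:: elem true j; elem false j] | j <- t].

Lemma mem_blocks x : (x \in blocks) = picked t x.
Proof.
apply/flatten_mapP/idP => [[j jt]|/andP[x_gt0 xt]].
  by rewrite !inE => /orP[]/eqP->; rewrite /picked block_elem jt /elem addn1.
exists (block x) => //; have := elemK x_gt0; set j := block x.
by case: (odd x) => <-; rewrite !inE eqxx ?orbT.
Qed.

Lemma relabel_blocks : map (relabel t) blocks = iota 1 (size t).*2.
Proof.
have t_uniq : uniq t := subseq_uniq t_sub (iota_uniq 0 n).
rewrite /blocks -(flatten_elem_iota 0) -(map_index_iota t_uniq) map_flatten -!map_comp.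
by congr flatten; apply: eq_map => j /=; rewrite !relabel_elem.
Qed.

Lemma chosen_blocks : perm_eq chosen blocks.
Proof.
apply: uniq_perm; first exact: filter_uniq uniq_pi.
  by apply: (@map_uniq _ _ (relabel t)); rewrite relabel_blocks iota_uniq.
move=> x; rewrite mem_filter mem_blocks andb_idr // => /andP[x_gt0 xt].
have lt_bn : block x < n by have := mem_subseq t_sub xt; rewrite mem_iota.
by rewrite -(elemK x_gt0) elem_in_pi.
Qed.

Lemma sigma_perm : is_perm sigma /\ size sigma = (size t).*2.
Proof.
have perm_sigma : perm_eq sigma (iota 1 (size t).*2).
  by rewrite -relabel_blocks; exact: perm_map _ chosen_blocks.
have size_sigma : size sigma = (size t).*2 by rewrite (perm_size perm_sigma) size_iota.
by split=> //; rewrite /is_perm size_sigma.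
Qed.

Lemma chosen_sigma_iso : order_iso chosen sigma.
Proof.
split=> [|i j lt_i lt_j]; first by rewrite size_map.
have picked_nth k : k < size chosen -> picked t (nth 0 chosen k).
  by move=> lt_k; have := mem_nth 0 lt_k; rewrite mem_filter => /andP[].
by rewrite !(nth_map 0) // (relabel_mono t_sorted) //; apply: picked_nth.
Qed.

(* Parity is preserved, hence so is the horizontal alternation condition. *)
Lemma sigma_pairwise :
  pairwise no_odd_before_even pi -> pairwise no_odd_before_even sigma.
Proof.
move=> pi_ok; rewrite /sigma pairwise_map.
have chosen_ok := subseq_pairwise (filter_subseq (picked t) pi) pi_ok.
by apply: sub_pairwise chosen_ok => x y; rewrite /= /no_odd_before_even !odd_relabel.
Qed.

(* If the positions of the parity-par members of the chosen blocks are monotone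
   along t, the parity-par entries of sigma are monotone: read in pi order they
   are the standardised blocks in the order of their positions in t. *)
Lemma sigma_class_monotone par :
  monotone_by (pos par) t -> monotone [seq x <- sigma | odd x == par].
Proof.
move=> mono_t; set c := [seq x <- chosen | odd x == par].
have c_elem : {in c, forall x, elem par (block x) = x}.
  by move=> x; rewrite !mem_filter => /and3P[/eqP <- /andP[x_gt0 _] _]; exact: elemK.
have -> : [seq x <- sigma | odd x == par] = map (elem par) (map (index^~ t) (map block c)).
  rewrite /sigma filter_map (eq_filter (a2 := fun x => odd x == par)); last first.
    by move=> x; rewrite /= odd_relabel.
  rewrite -!map_comp; apply/eq_in_map => x x_c /=.
  by rewrite /relabel; move: x_c; rewrite mem_filter => /andP[/eqP ->].
have blocks_in_t : {subset map block c <= t}.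
  by move=> y /mapP[x + ->]; rewrite !mem_filter => /and3P[_ /andP[_ xt] _].
have c_in_pi_order : sorted (relpre (pos par) ltn) (map block c).
  rewrite -sorted_map; have -> : map (pos par) (map block c) = map (index^~ pi) c.
    by rewrite -map_comp; apply/eq_in_map => x x_c /=; rewrite /pos c_elem.
  apply: (subseq_sorted ltn_trans) (iota_ltn_sorted 0 (size pi)).
  rewrite -(map_index_iota uniq_pi); apply: map_subseq.
  exact: subseq_trans (filter_subseq _ _) (filter_subseq _ _).
apply: monotone_map_mono (ltn_elem2 par) _.
exact: index_monotone blocks_in_t c_in_pi_order mono_t.
Qed.

End Pattern.

Theorem mainTheorem10 :
  forall (k : nat), 0 < k ->
  forall pi : seq nat, horiz_alt pi -> size pi = 2 * k ^ 4 ->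
  exists sigma : seq nat,
    monotone_horiz_alt sigma /\ 2 * k <= size sigma /\ contains pi sigma.
Proof.
move=> k k_gt0 pi [pi_perm pi_horiz] pi_size; set n := k ^ 4.
have pi_size2 : size pi = n.*2 by rewrite pi_size mul2n.
have many_blocks : k.-1 * (k.-1 + 2) * (k.-1 * (k.-1 + 2)) < size (iota 0 n).
  by rewrite size_iota /n -(prednK k_gt0); nia.
have [t t_sub [size_t mono_even mono_odd]] := erdos_szekeres_twice
  (uniq_pos pi_perm pi_size2 false) (uniq_pos pi_perm pi_size2 true) many_blocks.
have [sigma_is_perm size_sigma] := sigma_perm pi_perm pi_size2 t_sub.
exists (sigma pi t); split; last split.
- split; first split => //.
    by apply/evens_first_pairwise/sigma_pairwise; apply/evens_first_pairwise.
  split.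
    rewrite -(eq_filter (fun x => eqb_id (odd x))).
    exact: sigma_class_monotone mono_odd.
  rewrite -(eq_filter (fun x => eqbF_neg (odd x))).
  exact: sigma_class_monotone mono_even.
- by rewrite size_sigma -mul2n leq_mul2l -(prednK k_gt0) size_t orbT.
- exists (map (picked t) pi); split; first by rewrite size_map.
  by rewrite -filter_mask; exact: (chosen_sigma_iso pi t_sub).
Qed.
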